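(* The homology $H_\bullet(D)$ of a projective link diagram $D$, constructed below, is invariant (up to isomorphism of triply graded modules) under changing the orientation of the diagram $D$ (equivalently, of any of its components).
   Context: Diagrams. Identify $\mathbb{R}\mathrm{P}^3\setminus\{*\}$ with the twisted $I$-bundle $\mathbb{R}\mathrm{P}^2\tilde\times I$ and project links to $\mathbb{R}\mathrm{P}^2$, viewed as a 2-disk with antipodal boundary points identified. Let $D$ be an oriented projective diagram with set of crossings $\mathcal{X}$, $|\mathcal{X}|=n$, ordered arbitrarily. Each crossing has a sign $\pm1$ by the right-hand rule. Each crossing can be smoothed in type $0$ (the Kauffman $A$-smoothing, carrying coefficient $A$ in the relation $L_\times=AL_0+A^{-1}L_\infty$) or type $1$ (the $B$-smoothing, coefficient $A^{-1}$). A state is $s\in\{0,1\}^{\mathcal X}$; the corresponding complete smoothing is a disjoint union of circles in $\mathbb{R}\mathrm{P}^2$, each trivial (bounding a disk) or projective (not); each state has at most one projective circle. Let $\#0(s),\#1(s)$ be the numbers of $0$'s and $1$'s in $s$. Modules. $V=\langle 1,X\rangle$ is the free bigraded $\mathbb{Z}$-module with $\deg 1=(-2,0)$, $\deg X=(2,0)$; $\overline V=\langle\bar 1,\bar X\rangle$ with $\deg\bar1=(0,1)$, $\deg\bar X=(0,-1)$. For bigraded modules, $W\wedge W'=\bigoplus_{j=j_1+j_2,k=k_1+k_2}W_{j_1,k_1}\wedge W'_{j_2,k_2}$ (the tensor product of the pieces, with the convention that it is associative and reordering factors of a product $W_1\wedge\cdots\wedge W_n$ by a permutation $\sigma$ multiplies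 by $\mathrm{sign}(\sigma)$). The shift is $W\{l\}_{j,k}=W_{j-l,k}$. For a state $s$, enumerate its circles with the projective circle (if any) last, and set $C_s=(V_1\wedge\cdots\wedge V_r)\{\#0(s)-\#1(s)\}$ or $C_s=(V_1\wedge\cdots\wedge V_{r}\wedge\overline V_{r+1})\{\#0(s)-\#1(s)\}$, one factor $V$ per trivial circle and $\overline V$ for the projective circle. Put $C^i=\bigoplus_{\#0(s)-\#1(s)=i}C_s$. Partial differentials. Orient every circle of every state arbitrarily. An edge is $\alpha\in\{0,1,\star\}^{\mathcal X}$ with exactly one $\star$, at crossing $c$; $s_0=\alpha_{\star\to0}$, $s_1=\alpha_{\star\to1}$. Passing from $s_0$ to $s_1$ is a bifurcation of type $2\to1$ (two circles merge), $1\to2$ (one circle splits), or $1\to1$ (one circle becomes one circle); all other circles correspond bijectively. Position $c$ so that its two outgoing diagram arcs point northwest and northeast and incoming arcs come from southwest and southeast. A circle of a state near $c$ is locally consistent at $c$ if its orientation agrees with the diagram orientation of the northeast arc or disagrees with that of the southwest arc, and locally inconsistent if it disagrees with the northeast arc or agrees with the southwest arc. Define $d_\alpha:C_{s_0}\to C_{s_1}$ by $d_\alpha=P_\rho\circ(\varphi\wedge\mathcal I)\circ P_\sigma$, where: $P_\sigma$ permutes wedge factors of $C_{s_0}$ (with sign of the permutation) so that the factors of the circles involved in the bifurcation come first, and for type $2\to1$ the first factor is the left circle if $c$ is positive and the top circle if $c$ is negative; $\varphi=m$ for type $2\to1$, $\varphi=\Delta$ for type $1\to2$ (the first output factor being the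 top circle if $c$ is positive and the left circle if $c$ is negative), and $\varphi=0$ for type $1\to1$; $\mathcal I$ acts on each remaining factor by $1\mapsto1$, $X\mapsto\pm X$ (resp. $\bar1\mapsto\bar1$, $\bar X\mapsto\pm\bar X$), with $+$ iff the chosen orientations of the corresponding circles in $s_0$ and $s_1$ agree; $P_\rho$ reorders the result into the factor order of $C_{s_1}$. In the formulas for $m,\Delta$, write $X'=\epsilon X$, $\bar X'=\epsilon\bar X$, where $\epsilon=+1$ if the circle carrying that factor is locally consistent at $c$ and $-1$ otherwise: $m:V\wedge V\to V$: $1\wedge1\mapsto1$, $1\wedge X'\mapsto X'$, $X'\wedge1\mapsto X'$, $X'\wedge X'\mapsto0$; $\Delta:V\to V\wedge V$: $1\mapsto 1_1\wedge X'_2+X'_1\wedge1_2$, $X'\mapsto X'_1\wedge X'_2$. $m:\overline V\wedge V\to\overline V$: $\bar1\wedge1\mapsto\bar1$, $\bar1\wedge X'\mapsto0$, $\bar X'\wedge1\mapsto\bar X'$, $\bar X'\wedge X'\mapsto0$; $\Delta:\overline V\to\overline V\wedge V$: $\bar1\mapsto\bar1_1\wedge X'_2$, $\bar X'\mapsto\bar X'_1\wedge X'_2$. $m:V\wedge\overline V\to\overline V$: $1\wedge\bar1\mapsto\bar1$, $1\wedge\bar X'\mapsto\bar X'$, $X'\wedge\bar1\mapsto0$, $X'\wedge\bar X'\mapsto0$; $\Delta:\overline V\to V\wedge\overline V$: $\bar1\mapsto X'_1\wedge\bar1_2$, $\bar X'\mapsto X'_1\wedge\bar X'_2$. The total differential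 is $d^{(i)}=\sum d_\alpha:C^i\to C^{i-2}$, summed over all edges $\alpha$ with $\#0(\alpha)-\#1(\alpha)=i-1$; it satisfies $d\circ d=0$. The homology is $H_i(D)=\ker d^{(i)}/\operatorname{im}d^{(i+2)}$, triply graded by $(i,j,k)$. *)

(* Combinatorial model of oriented projective link diagrams
   (diagrams in RP^2 = disk with antipodal boundary points identified) and of
   the chain complex / homology described in the paper. *)
From HB Require Import structures.
From mathcomp Require Import all_boot all_order all_algebra.
Set Implicit Arguments. Unset Strict Implicit. Unset Printing Implicit Defensive.
Import GRing.Theory Num.Theory.

(* An (unoriented) projective diagram, drawn in the disk model.
   - crossings are 'I_ncross; each crossing c has 4 ports (c,0..3) listed
     counterclockwise in the disk picture, ports 0,2 belonging to the
     under-strand and ports 1,3 to the over-strand;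
   - [mate] pairs the two ports joined by a diagram arc (an edge);
   - [twist p] = parity of the number of times the edge at p crosses the
     boundary of the disk (i.e. meets RP^1);
   - [nfree] crossingless components, with [ftwist j] = their parity of
     boundary crossings (true = projective circle). *)
Record pdiagram := PDiagram {
  ncross : nat;
  nfree : nat;
  mate : ('I_ncross * 'I_4)%type -> ('I_ncross * 'I_4)%type;
  twist : ('I_ncross * 'I_4)%type -> bool;
  ftwist : 'I_nfree -> bool }.
Arguments mate : clear implicits.
Arguments twist : clear implicits.
Arguments ftwist : clear implicits.

Section Diagram.
Variable D : pdiagram.
Local Notation N := (ncross D).

Definition port := ('I_N * 'I_4)%type.

Definition addp (p : port) (j : nat) : port :=
  (p.1, Ordinal (ltn_pmod (p.2 + j) (isT : 0 < 4))).

Definition well_formed : Prop :=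
  (forall p, mate D (mate D p) = p) /\ (forall p, mate D p != p) /\
  (forall p, twist D (mate D p) = twist D p).

(* flag (p,b): a side of the edge at port p; b = true is the counterclockwise
   side (towards port p+1). *)
Definition flag := (port * bool)%type.
Definition tv (x : flag) : flag :=
  if x.2 then (addp x.1 1, false) else (addp x.1 3, true).
Definition te (x : flag) : flag :=
  (mate D x.1, if twist D x.1 then x.2 else ~~ x.2).
Definition faceRel : rel flag := fun x y => (y == tv x) || (y == te x).
Definition compRel : rel flag :=
  fun x y => faceRel x y || (y == (x.1, ~~ x.2)).
(* Euler characteristic (faces - vertices + edges, with E = 2V) of the
   closed surface of the connected component of the ribbon graph containing r *)
Definition chi (r : flag) : int :=
  (#|[set x | connect compRel r x & x \in roots faceRel]|)%:Z
  - (#|[set c : 'I_N | connect compRel r ((c, ord0), false)]|)%:Z.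
(* The diagram embeds in RP^2: every component is cellularly embedded in a
   sphere (chi = 2) or in RP^2 (chi = 1), and altogether at most one of them
   is of RP^2-type or is a projective crossingless circle. *)
Definition realizable : Prop :=
  (forall r, r \in roots compRel -> chi r = 2 \/ chi r = 1) /\
  (#|[set r | (r \in roots compRel) && (chi r == 1)]|
     + #|[set j | ftwist D j]| <= 1)%N.

(* An orientation: o p = true iff the diagram orientation points away from
   the crossing along port p. *)
Definition orientation (o : port -> bool) : Prop :=
  (forall c : 'I_N, o (c, inord 0) != o (c, inord 2)) /\
  (forall c : 'I_N, o (c, inord 1) != o (c, inord 3)) /\
  (forall p, o (mate D p) != o p).

(* s c = false : 0-smoothing (Kauffman A), s c = true : 1-smoothing (B) *)
Definition state := {ffun 'I_N -> bool}.

(* the port joined to p by the smoothing at its crossing: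
   A pairs {0,1},{2,3};  B pairs {1,2},{3,0} *)
Definition sm (s : state) (p : port) : port :=
  if s p.1 then (if odd p.2 then addp p 1 else addp p 3)
  else (if odd p.2 then addp p 3 else addp p 1).

(* travelling along a circle: arrive at p, cross the smoothing, leave along
   the edge, arrive at the next port *)
Definition step (s : state) (p : port) : port := mate D (sm s p).

Definition circ (s : state) (p : port) : {set port} :=
  [set q | fconnect (step s) p q || fconnect (step s) p (sm s q)].

Definition cmin (s : state) (p : port) : port :=
  [arg min_(q < p in circ s p) (enum_rank q : nat)].

(* canonical orientation of a circle: the direction in which it arrives at
   its least port; canon s p q <-> the circle of p, so oriented, arrives at
   the crossing of q through q *)
Definition canon (s : state) (p q : port) : bool := fconnect (step s) (cmin s p) q.

Definition projc (s : state) (p : port) : bool :=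
  odd #|[set q | canon s p q && twist D (sm s q)]|.

Definition cid := (port + 'I_(nfree D))%type.

Definition is_circle (s : state) (x : cid) : bool :=
  match x with inl p => cmin s p == p | inr _ => true end.
Definition cproj (s : state) (x : cid) : bool :=
  match x with inl p => projc s p | inr j => ftwist D j end.

Definition corder (s : state) : seq cid :=
  [seq x <- enum {: cid} | is_circle s x && ~~ cproj s x] ++
  [seq x <- enum {: cid} | is_circle s x && cproj s x].

(* labelling of circles: false = 1 (resp. 1bar), true = X (resp. Xbar) *)
Definition lab := {ffun cid -> bool}.
Definition basis := (state * lab)%type.
Definition valid (b : basis) : bool :=
  [forall x, ~~ is_circle b.1 x ==> ~~ b.2 x].

Definition ideg (s : state) : int :=
  (#|[set c | ~~ s c]|)%:Z - (#|[set c | s c]|)%:Z.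
Definition jdeg (b : basis) : int :=
  ideg b.1 + \sum_(x | is_circle b.1 x && ~~ cproj b.1 x)
               (if b.2 x then 2%:Z else (- 2%:Z)%R).
Definition kdeg (b : basis) : int :=
  \sum_(x | is_circle b.1 x && cproj b.1 x) (if b.2 x then (- 1%:Z)%R else 1%:Z).

Definition ne (o : port -> bool) (c : 'I_N) : port :=
  (c, odflt ord0 [pick k : 'I_4 | o (c, k) && o (addp (c, k) 1)]).
Definition nw o c := addp (ne o c) 1.
Definition sw o c := addp (ne o c) 2.
Definition se o c := addp (ne o c) 3.

Definition cidp (s : state) (p : port) : cid := inl (cmin s p).

(* epsilon of the circle through p (in state s) at crossing c: +1 iff the
   circle is locally consistent at c *)
Definition eps (o : port -> bool) (c : 'I_N) (s : state) (p : port) : int :=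
  let q := if ne o c \in circ s p then ne o c else sw o c in
  if canon s p q then (-1)%R else 1%R.

Definition xs (e : int) (b : bool) : int := if b then e else 1%R.

End Diagram.

Definition perm_sign (T : eqType) (s t : seq T) : int :=
  ((-1) ^+ (size [seq xy <- [seq (x, y) | x <- s, y <- s]
                | (index xy.1 s < index xy.2 s)%N && (index xy.2 t < index xy.1 t)%N]))%R.

Section Complex.
Local Open Scope ring_scope.
Variable D : pdiagram.
Variable o : port D -> bool.
Local Notation N := (ncross D).

(* matrix coefficient of the partial differential d_alpha, alpha having its
   star at c, from generator b0 of C_{s0} to generator b1 of C_{s1}.
   The "first" circle (left if c positive / top if c negative, for s0; top if
   positive / left if negative, for s1) is in all cases the circle through
   the NW port; the other circle at c is the one through SE. *)
Definition dedge (c : 'I_N) (b0 b1 : basis D) : int :=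
  let s0 := b0.1 in let l0 := b0.2 in let s1 := b1.1 in let l1 := b1.2 in
  if ~~ (valid b0 && valid b1) then 0 else
  let a := cidp s0 (nw o c) in let b := cidp s0 (se o c) in
  let o1 := cidp s1 (nw o c) in let o2 := cidp s1 (se o c) in
  let ord0 := corder s0 in let ord1 := corder s1 in
  if (a != b) && (o1 == o2) then
    let rest := [seq x <- ord0 | x \notin [:: a; b]] in
    if [forall x, (x \in rest) ==> (l1 x == l0 x)]
       && (l1 o1 == l0 a || l0 b) && ~~ (l0 a && l0 b)
       && (cproj s0 a ==> ~~ l0 b) && (cproj s0 b ==> ~~ l0 a)
    then perm_sign ord0 (a :: b :: rest) * perm_sign (o1 :: rest) ord1
         * xs (eps o c s0 (nw o c)) (l0 a) * xs (eps o c s0 (se o c)) (l0 b)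
         * xs (eps o c s1 (nw o c)) (l1 o1)
    else 0
  else if (a == b) && (o1 != o2) then
    let rest := [seq x <- ord0 | x != a] in
    if [forall x, (x \in rest) ==> (l1 x == l0 x)]
       && (if cproj s0 a then
             (if cproj s1 o1 then (l1 o1 == l0 a) && l1 o2
              else (l1 o2 == l0 a) && l1 o1)
           else (if l0 a then l1 o1 && l1 o2 else l1 o1 != l1 o2))
    then perm_sign ord0 (a :: rest) * perm_sign (o1 :: o2 :: rest) ord1
         * xs (eps o c s0 (nw o c)) (l0 a) * xs (eps o c s1 (nw o c)) (l1 o1)
         * xs (eps o c s1 (se o c)) (l1 o2)
    else 0
  else 0 .

Definition is_edge (c : 'I_N) (s0 s1 : state D) : bool :=
  ~~ s0 c && s1 c && [forall c', (c' != c) ==> (s0 c' == s1 c')].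

Definition dcoef (b0 b1 : basis D) : int :=
  \sum_(c | is_edge c b0.1 b1.1) dedge c b0 b1.

Definition chain := {ffun basis D -> int}.

Definition dmap (x : chain) : chain :=
  [ffun b1 => \sum_b0 x b0 * dcoef b0 b1].

Definition inC (i : int) (x : chain) : Prop :=
  forall b, x b != 0 -> valid b /\ ideg b.1 = i.
Definition inCg (i j k : int) (x : chain) : Prop :=
  forall b, x b != 0 -> [/\ valid b, ideg b.1 = i, jdeg b = j & kdeg b = k].

(* cycles and boundaries in tridegree (i,j,k):
   H_{i,j,k} = (ker d^(i))_{j,k} / (im d^(i+2))_{j,k} *)
Definition hcycle (i j k : int) (x : chain) : Prop := inCg i j k x /\ dmap x = 0.
Definition hbound (i j k : int) (x : chain) : Prop :=
  inCg i j k x /\ exists y, inC (i + 2) y /\ dmap y = x.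

End Complex.
Local Open Scope ring_scope.

(* H(D1,o1) and H(D2,o2) are isomorphic as triply graded modules: in every
   tridegree there is a homomorphism of cycle groups, mapping boundaries to
   boundaries, inducing a bijection on the quotients. *)
Definition homology_iso (D1 D2 : pdiagram) (o1 : port D1 -> bool)
    (o2 : port D2 -> bool) : Prop :=
  forall i j k : int, exists f : chain D1 -> chain D2,
    [/\ (forall x y, hcycle o1 i j k x -> hcycle o1 i j k y -> f (x + y) = f x + f y),
        (forall x, hcycle o1 i j k x -> hcycle o2 i j k (f x)),
        (forall x, hbound o1 i j k x -> hbound o2 i j k (f x)),
        (forall x, hcycle o1 i j k x -> hbound o2 i j k (f x) -> hbound o1 i j k x)
      & (forall z, hcycle o2 i j k z -> exists x, hcycle o1 i j k x /\ hbound o2 i j k (z - f x))].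

From mathcomp Require Import all_boot all_order all_algebra zify ring.
Set Implicit Arguments. Unset Strict Implicit. Unset Printing Implicit Defensive.
Import GRing.Theory.

(* The orientation o enters the chain complex only through the choice, at
   each crossing c, of the north-east port [ne o c]: states, circles, their
   enumeration, labels and tridegrees do not depend on it.  Two orientations
   therefore differ crossing by crossing by turning the north-east port by
   some number of quarter turns.  The key local fact ([dedge_ref_rot]) is that
   a quarter turn multiplies every partial differential at that crossing by a
   sign depending only on the port: the two circles involved stay the same
   but are exchanged in one of the two states, and every local consistency
   sign epsilon is reversed.  Hence d_alpha for o2 is [orient_sign o1 o2 c]
   times d_alpha for o1, and the diagonal involution multiplying a generator
   by the product of these signs over its 1-smoothed crossings intertwines the
   two differentials, the ends of an edge differing exactly at c.  Such an
   involution preserves the tridegree, hence induces an isomorphism in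
   homology ([homology_iso_scale]). *)

Section Rotation.
Variable D : pdiagram.
Implicit Types p q y : port D.

Lemma addp0 p : addp p 0 = p.
Proof.
case: p => c [k Hk]; congr pair; apply: val_inj => /=.
by rewrite addn0 modn_small.
Qed.

Lemma addpA p i j : addp (addp p i) j = addp p (i + j).
Proof.
case: p => c [k Hk]; congr pair; apply: val_inj => /=.
by rewrite modnDml addnA.
Qed.

Lemma addp_fst p j : (addp p j).1 = p.1.
Proof. by []. Qed.

Lemma addp_mod p j : addp p j = addp p (j %% 4).
Proof.
case: p => c [k Hk]; congr pair; apply: val_inj => /=.
by rewrite modnDmr.
Qed.

Lemma addp4 p : addp p 4 = p.
Proof. by rewrite addp_mod addp0. Qed.

Lemma odd_addp p j : odd (addp p j).2 = odd p.2 (+) odd j.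
Proof. by case: p => c [k Hk] /=; rewrite odd_mod // oddD. Qed.

Lemma addp_eq p i j : (addp p i == addp p j) = (i %% 4 == j %% 4).
Proof.
case: p => c [k Hk]; rewrite /addp xpair_eqE eqxx /=.
apply/eqP/eqP => [/(congr1 val) /= /eqP|H]; last first.
  by apply: val_inj; rewrite /= -modnDmr H modnDmr.
rewrite -(modnDmr k i) -(modnDmr k j).
have : i %% 4 < 4 by rewrite ltn_mod.
have : j %% 4 < 4 by rewrite ltn_mod.
move: (i %% 4) (j %% 4) => a b Hb Ha.
by rewrite eqn_modDl !modn_small // => /eqP.
Qed.

Lemma addp_diff p y : y.1 = p.1 -> y = addp p ((y.2 + 4 - p.2) %% 4).
Proof.
case: p y => c [k Hk] [c' [k' Hk']] /= ->; congr pair; apply: val_inj => /=.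
rewrite modnDmr.
by move: Hk Hk'; do 4?[case: k => [|k]] => // _; do 4?[case: k' => [|k']].
Qed.

Lemma port_cases p y : y.1 = p.1 ->
  [\/ y = p, y = addp p 1, y = addp p 2 | y = addp p 3].
Proof.
move=> /addp_diff ->; have : (y.2 + 4 - p.2) %% 4 < 4 by rewrite ltn_mod.
case: (_ %% 4) => [|[|[|[|//]]]] _; by [constructor 1; rewrite addp0
  | constructor 2 | constructor 3 | constructor 4].
Qed.

End Rotation.

Section Smoothing.
Variable D : pdiagram.
Implicit Types (s : state D) (p q z : port D).

Lemma sm_fst s p : (sm s p).1 = p.1.
Proof. by rewrite /sm; case: ifP; case: ifP. Qed.

Lemma smE s p : sm s p = addp p (if s p.1 == odd p.2 then 1 else 3).
Proof. by rewrite /sm; case: (s p.1); case: (odd p.2). Qed.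

Lemma sm_addp s q i :
  sm s (addp q i) = addp q (i + (if s q.1 == odd q.2 (+) odd i then 1 else 3)).
Proof. by rewrite smE addp_fst odd_addp addpA. Qed.

Lemma smK s : involutive (sm s).
Proof.
move=> p; rewrite [sm s p]smE smE addp_fst odd_addp addpA.
by case: (s p.1); case: (odd p.2); rewrite /= addp_mod addp0.
Qed.

Lemma sm_inj s : injective (sm s).
Proof. exact: inv_inj (@smK s). Qed.

Lemma sm_neq s p : sm s p != p.
Proof.
rewrite smE; apply/negP => /eqP H.
have : addp p (if s p.1 == odd p.2 then 1 else 3) == addp p 0 by rewrite addp0 H.
by rewrite addp_eq; case: ifP.
Qed.

Lemma sm_addp2 s p : sm s (addp p 2) = addp (sm s p) 2.
Proof. by rewrite !smE addp_fst odd_addp /= addbF !addpA addnC. Qed.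

Lemma sm_eq_at s s' p : s p.1 = s' p.1 -> sm s p = sm s' p.
Proof. by rewrite /sm => ->. Qed.

Lemma sm_switch s s' p : s p.1 != s' p.1 -> sm s' (sm s p) = addp p 2.
Proof.
rewrite [sm s p]smE smE addp_fst odd_addp addpA.
by case: (s p.1); case: (s' p.1); case: (odd p.2) => //= _; rewrite addp_mod.
Qed.

Lemma sm_switch_nbrs s s' z : s z.1 != s' z.1 ->
  (sm s z = addp z 1 /\ sm s' z = addp z 3) \/
  (sm s z = addp z 3 /\ sm s' z = addp z 1).
Proof.
rewrite !smE; case: (s z.1); case: (s' z.1); case: (odd z.2) => //= _;
  by [left | right].
Qed.

Lemma crossing_ports s z (w : port D) : w.1 = z.1 ->
  [\/ w = z, w = addp z 2, w = sm s z | w = sm s (addp z 2)].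
Proof.
move=> /port_cases; rewrite sm_addp2 smE addpA.
by case: ifP => _ [] ->; rewrite ?addp4 ?(addp_mod z 5);
  by [constructor 1 | constructor 2 | constructor 3 | constructor 4].
Qed.

Lemma sm_odd_ports s z :
  let b := s z.1 == ~~ odd z.2 in
  sm s (addp z 1) = (if b then addp z 2 else z) /\
  sm s (addp z 3) = (if b then z else addp z 2).
Proof.
by rewrite /= !sm_addp /= addbT; case: ifP => _; rewrite ?addp4 ?(addp_mod z 6).
Qed.

End Smoothing.

Lemma count_change2 (U : eqType) (P P' : pred U) e1 e2 (l : seq U) :
  e1 != e2 -> uniq l -> e1 \in l -> e2 \in l ->
  (forall x, x != e1 -> x != e2 -> P' x = P x) ->
  (count P' l + P e1 + P e2 = count P l + P' e1 + P' e2)%N.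
Proof.
move=> Hne Hu H1 H2 HP.
have H2' : e2 \in rem e1 l by rewrite (rem_filter _ Hu) mem_filter /= H2 andbT eq_sym.
set l2 := rem e2 (rem e1 l).
have E : perm_eq l (e1 :: e2 :: l2).
  by apply: (perm_trans (perm_to_rem H1)); rewrite perm_cons; apply: perm_to_rem H2'.
have Hl2 x : x \in l2 -> x != e1 /\ x != e2.
  rewrite /l2 (rem_filter _ (rem_uniq _ Hu)) (rem_filter _ Hu) !mem_filter /=.
  by case/andP=> -> /andP [-> _].
rewrite !(permP E) /= (@eq_in_count _ P' P) => [|x /Hl2 []]; [lia | exact: HP].
Qed.

Lemma sign_count_change2 (U : eqType) (P P' : pred U) e1 e2 (l : seq U) :
  e1 != e2 -> uniq l -> e1 \in l -> e2 \in l ->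
  (forall x, x != e1 -> x != e2 -> P' x = P x) ->
  (P e1 + P e2 + P' e1 + P' e2 = 1)%N ->
  ((-1) ^+ count P' l = - (-1) ^+ count P l :> int)%R.
Proof.
move=> Hne Hu H1 H2 HP; have := count_change2 Hne Hu H1 H2 HP.
move: (count P l) (count P' l) => n n'.
case: (P e1); case: (P e2); case: (P' e1); case: (P' e2) => //= E _;
  [have -> : n = n'.+1 by lia | have -> : n = n'.+1 by lia
  | have -> : n' = n.+1 by lia | have -> : n' = n.+1 by lia];
  by rewrite exprS mulN1r ?opprK.
Qed.

Section ReorderingSign.
Variable T : eqType.
Local Open Scope ring_scope.

Lemma pairs_uniq (s : seq T) : uniq s -> uniq [seq (x, y) | x <- s, y <- s].
Proof. by move=> Hs; apply: allpairs_uniq => // [[? ?] [? ?] _ _ /= ->]. Qed.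

Lemma index_swap (a b : T) r x1 x2 : a != b ->
  ~~ ((x1 == a) && (x2 == b)) -> ~~ ((x1 == b) && (x2 == a)) ->
  (index x1 (b :: a :: r) < index x2 (b :: a :: r))%N =
  (index x1 (a :: b :: r) < index x2 (a :: b :: r))%N.
Proof.
move=> Hab /=.
case: (eqVneq x1 a) => [->|H1a]; case: (eqVneq x2 b) => [->|H2b] //=;
case: (eqVneq x1 b) => [E1|H1b]; case: (eqVneq x2 a) => [E2|H2a] //=;
  rewrite ?eqxx ?(eq_sym b a) ?(negbTE Hab) ?E1 ?E2 //=;
  rewrite ?(eq_sym a) ?(eq_sym b) ?(negbTE H1a) ?(negbTE H2b) ?(negbTE H1b)
    ?(negbTE H2a) //=.
Qed.

Lemma index_order (s : seq T) a b : a != b -> a \in s -> b \in s ->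
  ((index a s < index b s) + (index b s < index a s) = 1)%N.
Proof.
move=> Hab Ha Hb; have : index a s != index b s.
  by apply: contra Hab => /eqP /(index_inj a Ha Hb) ->.
by case: ltngtP.
Qed.

Lemma perm_sign_swap_target (s r : seq T) a b : a != b -> uniq s ->
  a \in s -> b \in s -> perm_sign s (b :: a :: r) = - perm_sign s (a :: b :: r).
Proof.
move=> Hab Hs Ha Hb; rewrite /perm_sign !size_filter.
have Hba : (b == a) = false by rewrite eq_sym (negbTE Hab).
apply: (sign_count_change2 (e1 := (a, b)) (e2 := (b, a))).
- by rewrite xpair_eqE negb_and Hab.
- exact: pairs_uniq.
- exact: allpairs_f.
- exact: allpairs_f.
- by move=> [x1 x2]; rewrite !xpair_eqE /= => H1 H2; rewrite index_swap // andbC.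
- rewrite /= !eqxx Hba (negbTE Hab) /= !andbT ltn0 !andbF addn0 add0n addnC.
  exact: index_order.
Qed.

Lemma perm_sign_swap_source (t r : seq T) a b : a != b -> uniq (a :: b :: r) ->
  a \in t -> b \in t -> perm_sign (b :: a :: r) t = - perm_sign (a :: b :: r) t.
Proof.
move=> Hab Hs Ha Hb; rewrite /perm_sign !size_filter.
have Hperm : perm_eq (b :: a :: r) (a :: b :: r) by apply/permP => Q; rewrite /= addnCA.
rewrite (permP (perm_allpairs (fun x y => (x, y)) Hperm Hperm)).
have Hba : (b == a) = false by rewrite eq_sym (negbTE Hab).
apply: (sign_count_change2 (e1 := (a, b)) (e2 := (b, a))).
- by rewrite xpair_eqE negb_and Hab.
- exact: pairs_uniq.
- by apply: allpairs_f; rewrite !inE eqxx ?orbT.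
- by apply: allpairs_f; rewrite !inE eqxx ?orbT.
- by move=> [x1 x2]; rewrite !xpair_eqE /= => H1 H2; rewrite index_swap.
- rewrite /= !eqxx Hba (negbTE Hab) /= !addn0 addnC.
  exact: index_order.
Qed.

End ReorderingSign.

(* The local consistency sign of the circle of p at the crossing of a
   reference port q, which plays the role of the north-east port: the
   canonical orientation of the circle is read off at q, or at the opposite
   port q + 2 if the circle does not pass through q. *)
Definition eps_ref (D : pdiagram) (q : port D) (s : state D) (p : port D) : int :=
  let r := if q \in circ s p then q else addp q 2 in
  if canon s p r then (-1)%R else 1%R.

Section PartialDifferential.
Variable D : pdiagram.
Local Open Scope ring_scope.

Lemma corder_uniq (s : state D) : uniq (corder s).
Proof.
rewrite /corder cat_uniq; apply/and3P; split;
  [exact: filter_uniq (enum_uniq _)| |exact: filter_uniq (enum_uniq _)].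
apply/hasPn => x; rewrite !mem_filter => /andP [/andP [_ H1] _].
by apply/negP => /andP [/andP [_ H2] _]; rewrite H1 in H2.
Qed.

Lemma corder_circ (s : state D) (x : cid D) : x \in corder s -> is_circle s x.
Proof. by rewrite /corder mem_cat !mem_filter => /orP [] /andP [/andP [] ]. Qed.

Definition dedge_body (s0 : state D) (l0 : lab D) (s1 : state D) (l1 : lab D)
    (a b o1 o2 : cid D) (ea eb eo1 eo2 : int) : int :=
  let ord0 := corder s0 in let ord1 := corder s1 in
  if (a != b) && (o1 == o2) then
    let rest := [seq x <- ord0 | x \notin [:: a; b]] in
    if [forall x, (x \in rest) ==> (l1 x == l0 x)]
       && (l1 o1 == l0 a || l0 b) && ~~ (l0 a && l0 b)
       && (cproj s0 a ==> ~~ l0 b) && (cproj s0 b ==> ~~ l0 a)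
    then perm_sign ord0 (a :: b :: rest) * perm_sign (o1 :: rest) ord1
         * xs ea (l0 a) * xs eb (l0 b) * xs eo1 (l1 o1)
    else 0
  else if (a == b) && (o1 != o2) then
    let rest := [seq x <- ord0 | x != a] in
    if [forall x, (x \in rest) ==> (l1 x == l0 x)]
       && (if cproj s0 a then
             (if cproj s1 o1 then (l1 o1 == l0 a) && l1 o2
              else (l1 o2 == l0 a) && l1 o1)
           else (if l0 a then l1 o1 && l1 o2 else l1 o1 != l1 o2))
    then perm_sign ord0 (a :: rest) * perm_sign (o1 :: o2 :: rest) ord1
         * xs ea (l0 a) * xs eo1 (l1 o1) * xs eo2 (l1 o2)
    else 0
  else 0.

Definition dedge_ref (q : port D) (b0 b1 : basis D) : int :=
  let s0 := b0.1 in let l0 := b0.2 in let s1 := b1.1 in let l1 := b1.2 in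
  if ~~ (valid b0 && valid b1) then 0 else
  dedge_body s0 l0 s1 l1 (cidp s0 (addp q 1)) (cidp s0 (addp q 3))
    (cidp s1 (addp q 1)) (cidp s1 (addp q 3))
    (eps_ref q s0 (addp q 1)) (eps_ref q s0 (addp q 3))
    (eps_ref q s1 (addp q 1)) (eps_ref q s1 (addp q 3)).

Lemma dedgeE (o : port D -> bool) c (b0 b1 : basis D) :
  dedge o c b0 b1 = dedge_ref (ne o c) b0 b1.
Proof. by []. Qed.

Lemma dedge_body_11 (s0 : state D) (l0 : lab D) (s1 : state D) (l1 : lab D)
    (a b o1 o2 : cid D) (ea eb eo1 eo2 : int) :
  a != b -> o1 != o2 -> dedge_body s0 l0 s1 l1 a b o1 o2 ea eb eo1 eo2 = 0.
Proof. by move=> H1 H2; rewrite /dedge_body H1 (negbTE H1) (negbTE H2). Qed.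

Lemma dedge_body_same (s0 : state D) (l0 : lab D) (s1 : state D) (l1 : lab D)
    (a o : cid D) (ea eb eo1 eo2 : int) :
  dedge_body s0 l0 s1 l1 a a o o ea eb eo1 eo2 = 0.
Proof. by rewrite /dedge_body !eqxx. Qed.

(* Reversing all local signs: m involves an even number of X-labels, Delta
   an odd number, so this multiplies Delta by -1 and leaves m unchanged. *)
Lemma dedge_body_neg (s0 : state D) (l0 : lab D) (s1 : state D) (l1 : lab D)
    (a b o1 o2 : cid D) (ea eb eo1 eo2 : int) :
  dedge_body s0 l0 s1 l1 a b o1 o2 (- ea) (- eb) (- eo1) (- eo2) =
  (if a == b then -1 else 1) * dedge_body s0 l0 s1 l1 a b o1 o2 ea eb eo1 eo2.
Proof.
rewrite /dedge_body; case: (eqVneq a b) => [Eab|Nab] /=.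
  case: ifP => _; last by rewrite mulr0.
  case: ifP => [/andP [_ Hc]|_]; last by rewrite mulr0.
  move: Hc; case: (cproj s0 a); case: (cproj s1 o1);
  case: (l0 a); case: (l1 o1); case: (l1 o2) => //= _; rewrite /xs /=; ring.
case: ifP => _; last by rewrite mulr0.
case: ifP => [/andP [/andP [/andP [/andP [_ H1] H2] _] _]|_]; last by rewrite mulr0.
move: H1 H2; case: (l0 a); case: (l0 b); case: (l1 o1) => //= _ _; rewrite /xs /=; ring.
Qed.

Lemma dedge_body_swap_source (s0 : state D) (l0 : lab D) (s1 : state D) (l1 : lab D)
    (a b o1 o2 : cid D) (ea eb eo1 eo2 : int) :
  a != b -> a \in corder s0 -> b \in corder s0 ->
  dedge_body s0 l0 s1 l1 b a o1 o2 eb ea eo1 eo2 =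
  - dedge_body s0 l0 s1 l1 a b o1 o2 ea eb eo1 eo2.
Proof.
move=> Hab Ha Hb; have Hba : b != a by rewrite eq_sym.
rewrite /dedge_body Hab Hba (negbTE Hab) (negbTE Hba) /=.
case: ifP => _; last by rewrite oppr0.
have -> : [seq x <- corder s0 | x \notin [:: b; a]] =
          [seq x <- corder s0 | x \notin [:: a; b]].
  by apply: eq_filter => x; rewrite !inE orbC.
set F := [forall x, _].
have -> : (F && (l1 o1 == l0 b || l0 a) && ~~ (l0 b && l0 a) && (cproj s0 b ==> ~~ l0 a)
   && (cproj s0 a ==> ~~ l0 b)) = (F && (l1 o1 == l0 a || l0 b) && ~~ (l0 a && l0 b)
   && (cproj s0 a ==> ~~ l0 b) && (cproj s0 b ==> ~~ l0 a)).
  by case: F; case: (l0 a); case: (l0 b); case: (l1 o1); case: (cproj s0 a);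
    case: (cproj s0 b).
case: ifP => _; last by rewrite oppr0.
rewrite (perm_sign_swap_target _ Hab (corder_uniq s0) Ha Hb); ring.
Qed.

Lemma dedge_body_swap_target (s0 : state D) (l0 : lab D) (s1 : state D) (l1 : lab D)
    (a o1 o2 : cid D) (ea eb eo1 eo2 : int) :
  o1 != o2 -> o1 \in corder s1 -> o2 \in corder s1 ->
  uniq (o1 :: o2 :: [seq x <- corder s0 | x != a]) ->
  (cproj s0 a -> cproj s1 o1 != cproj s1 o2) ->
  dedge_body s0 l0 s1 l1 a a o2 o1 ea eb eo2 eo1 =
  - dedge_body s0 l0 s1 l1 a a o1 o2 ea eb eo1 eo2.
Proof.
move=> Ho H1 H2 Hu Hp; rewrite /dedge_body eqxx /= Ho eq_sym Ho /=.
have -> : (if cproj s0 a then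
             (if cproj s1 o2 then (l1 o2 == l0 a) && l1 o1
              else (l1 o1 == l0 a) && l1 o2)
           else (if l0 a then l1 o2 && l1 o1 else l1 o2 != l1 o1)) =
          (if cproj s0 a then
             (if cproj s1 o1 then (l1 o1 == l0 a) && l1 o2
              else (l1 o2 == l0 a) && l1 o1)
           else (if l0 a then l1 o1 && l1 o2 else l1 o1 != l1 o2)).
  case: (cproj s0 a) Hp => [/(_ isT)|_]; last by rewrite andbC eq_sym.
  by case: (cproj s1 o1); case: (cproj s1 o2).
case: ifP => _; last by rewrite oppr0.
rewrite (perm_sign_swap_source Ho) //; ring.
Qed.

(* Turning the reference port by a quarter turn exchanges the involved
   circles of one of the two states and reverses all local signs; these are
   the two resulting identities. *)
Lemma dedge_body_rot_source (s0 : state D) (l0 : lab D) (s1 : state D) (l1 : lab D)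
    (a b o1 o2 : cid D) (ea eb eo1 eo2 : int) :
  a \in corder s0 -> b \in corder s0 -> (a = b -> ea = eb) ->
  dedge_body s0 l0 s1 l1 b a o1 o2 (- eb) (- ea) (- eo1) (- eo2) =
  - dedge_body s0 l0 s1 l1 a b o1 o2 ea eb eo1 eo2.
Proof.
move=> Ha Hb Hab; rewrite dedge_body_neg eq_sym.
case: (eqVneq a b) => [Eab|Nab] /=; first by rewrite mulN1r -Hab // Eab.
by rewrite mul1r dedge_body_swap_source.
Qed.

Lemma dedge_body_rot_target (s0 : state D) (l0 : lab D) (s1 : state D) (l1 : lab D)
    (a b o1 o2 : cid D) (ea eb eo1 eo2 : int) :
  o1 \in corder s1 -> o2 \in corder s1 -> (o1 = o2 -> eo1 = eo2) ->
  (a = b -> o1 != o2 -> uniq (o1 :: o2 :: [seq x <- corder s0 | x != a]) /\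
                        (cproj s0 a -> cproj s1 o1 != cproj s1 o2)) ->
  dedge_body s0 l0 s1 l1 a b o2 o1 (- ea) (- eb) (- eo2) (- eo1) =
  dedge_body s0 l0 s1 l1 a b o1 o2 ea eb eo1 eo2.
Proof.
move=> H1 H2 Ho Hsplit; rewrite dedge_body_neg.
case: (eqVneq o1 o2) => [Eo|No].
  by rewrite -Ho // Eo; case: eqP => [->|_]; rewrite ?dedge_body_same ?mulr0 ?mul1r.
case: (eqVneq a b) => [Eab|Nab]; last by rewrite !dedge_body_11 ?mulr0 // eq_sym.
have [Hu Hp] := Hsplit Eab No; rewrite -Eab in Hp *.
by rewrite (@dedge_body_swap_target s0 l0 s1 l1 a o1 o2) // mulN1r opprK.
Qed.

End PartialDifferential.

Lemma fclosed_orbit (T : finType) (f : T -> T) (A : pred T) x y :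
  (forall w, A w -> A (f w)) -> A x -> fconnect f x y -> A y.
Proof.
move=> HA Ax /iter_findex <-; elim: (findex f x y) => [|n IH] //=.
exact: HA.
Qed.

Lemma is_edgeP (D : pdiagram) c (s0 s1 : state D) : is_edge c s0 s1 ->
  [/\ s0 c = false, s1 c = true & forall x, x != c -> s0 x = s1 x].
Proof.
move=> /andP [/andP [/negbTE H0 H1] /forallP Hall]; split=> // x Hx.
by apply/eqP; move: (Hall x); rewrite Hx.
Qed.

Section WellFormed.
Variable D : pdiagram.
Hypothesis mateK : forall p, mate D (mate D p) = p.
Hypothesis mate_neq : forall p, mate D p != p.
Hypothesis twist_mate : forall p, twist D (mate D p) = twist D p.

Section Circles.
Implicit Types (s : state D) (p q x y z w : port D).

Lemma step_inj s : injective (step s).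
Proof.
move=> x y /(congr1 (mate D)); rewrite !mateK => /(congr1 (sm s)).
by rewrite !smK.
Qed.

Lemma step_sym s x y : fconnect (step s) x y = fconnect (step s) y x.
Proof. by apply: fconnect_sym; apply: step_inj. Qed.

Lemma same_step s x y :
  fconnect (step s) x y -> fconnect (step s) x =1 fconnect (step s) y.
Proof. by move=> H; apply: (same_connect (@step_sym s) H). Qed.

(* Walking the circle backwards: sm s . step s . sm s is the inverse of step s. *)
Lemma step_sm_step s x : step s (sm s (step s x)) = sm s x.
Proof. by rewrite /step smK mateK. Qed.

Lemma iter_step_sm s n x :
  iter n (step s) (sm s (iter n (step s) x)) = sm s x.
Proof.
by elim: n x => [|n IH] x //; rewrite iterSr iterS step_sm_step IH.
Qed.

Lemma step_sm_reverse s x y :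
  fconnect (step s) x y -> fconnect (step s) (sm s y) (sm s x).
Proof.
move=> /iter_findex <-; rewrite -(iter_step_sm s (findex (step s) x y) x).
exact: fconnect_iter.
Qed.

Lemma step_smE s x y :
  fconnect (step s) (sm s x) y = fconnect (step s) x (sm s y).
Proof.
by apply/idP/idP => /step_sm_reverse; rewrite smK step_sym.
Qed.

Lemma step_not_sm s x : ~~ fconnect (step s) x (sm s x).
Proof.
apply/negP => /iter_findex; move: (findex _ _ _) => n.
elim: n {-2}n (leqnn n) x => [|m IH] n.
  by rewrite leqn0 => /eqP -> x /= H; move: (sm_neq s x); rewrite -H eqxx.
case: n => [|[|n]] Hn x.
- by move=> /= H; move: (sm_neq s x); rewrite -H eqxx.
- by move=> /= H; move: (mate_neq (sm s x)); rewrite -[X in _ != X]H /step eqxx.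
- move=> H; apply: (IH n _ (step s x)); first by rewrite -ltnS (leq_trans _ Hn).
  apply: (@step_inj s); rewrite -iterSr -iterS step_sm_step -H.
  by rewrite iterSr iterS.
Qed.

Lemma circE s p y :
  (y \in circ s p) = fconnect (step s) p y || fconnect (step s) p (sm s y).
Proof. by rewrite inE. Qed.

Lemma circ_self s p : p \in circ s p.
Proof. by rewrite circE connect0. Qed.

Lemma circ_sm_mem s p y : (sm s y \in circ s p) = (y \in circ s p).
Proof. by rewrite !circE smK orbC. Qed.

Lemma circ_step s p w : w \in circ s p -> step s w \in circ s p.
Proof.
rewrite !circE => /orP [H|H]; apply/orP.
  by left; apply: connect_trans H (fconnect1 _ _).
right; apply: connect_trans H _.
by rewrite step_sym -(step_sm_step s w); apply: fconnect1.
Qed.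

Lemma circ_trans s p y : y \in circ s p -> circ s y = circ s p.
Proof.
rewrite circE => /orP [H|H]; apply/setP => z; rewrite !circE.
  by rewrite !(same_step H).
by rewrite !(same_step H) !step_smE smK orbC.
Qed.

Lemma circ_sm s x : circ s (sm s x) = circ s x.
Proof. by apply: circ_trans; rewrite circ_sm_mem circ_self. Qed.

Lemma cmin_spec s p : cmin s p \in circ s p /\
  forall q, q \in circ s p -> enum_rank (cmin s p) <= enum_rank q.
Proof. by rewrite /cmin; case: arg_minnP; first exact: circ_self. Qed.

Lemma cmin_in s p : cmin s p \in circ s p.
Proof. by case: (cmin_spec s p). Qed.

Lemma cmin_eq s p p' : circ s p = circ s p' -> cmin s p = cmin s p'.
Proof.
move=> E; have [H1 H2] := cmin_spec s p; have [H1' H2'] := cmin_spec s p'.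
rewrite E in H1 H2; apply: enum_rank_inj; apply: val_inj; apply/eqP.
by rewrite eqn_leq (H2 _ H1') (H2' _ H1).
Qed.

Lemma circ_cmin s p : circ s (cmin s p) = circ s p.
Proof. exact: circ_trans (cmin_in s p). Qed.

Lemma cmin_circ_eq s x y : cmin s x = cmin s y -> circ s x = circ s y.
Proof. by move=> E; rewrite -(circ_cmin s x) E circ_cmin. Qed.

Lemma cmin_mem s p y : y \in circ s p -> cmin s y = cmin s p.
Proof. by move=> H; apply: cmin_eq; apply: circ_trans. Qed.

Lemma cmin_sm s p : cmin s (sm s p) = cmin s p.
Proof. by apply: cmin_mem; rewrite circ_sm_mem circ_self. Qed.

Lemma cmin_idem s p : cmin s (cmin s p) = cmin s p.
Proof. exact: cmin_mem (cmin_in s p). Qed.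

Lemma canon_eq s p p' : circ s p = circ s p' -> canon s p = canon s p'.
Proof. by move=> E; rewrite /canon (cmin_eq E). Qed.

Lemma canon_sm s p y : y \in circ s p -> canon s p (sm s y) = ~~ canon s p y.
Proof.
rewrite /canon -(circ_cmin s p) circE; move: (cmin s p) => m.
case/orP => H; rewrite H /=.
  apply/negP => H2; move: (step_not_sm s y).
  by rewrite (connect_trans _ H2) // step_sym.
apply/esym/negP => H2; move: (step_not_sm s y).
by rewrite (connect_trans _ H) // step_sym.
Qed.

Lemma corder_mem s x : (inl (cmin s x) : cid D) \in corder s.
Proof.
rewrite /corder mem_cat !mem_filter -enumT mem_enum /= cmin_idem eqxx /=.
by case: (projc _ _).
Qed.

(* Twisted ports on the forward orbit of x; a circle is projective iff it
   crosses the boundary of the disk an odd number of times. *)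
Definition twists s x : nat := #|[set q | fconnect (step s) x q & twist D q]|.

Lemma twists_sm_arc s x :
  #|[set q | fconnect (step s) x q & twist D (sm s q)]| = twists s x.
Proof.
rewrite /twists -[RHS](card_preimset _ (@step_inj s)); apply: eq_card => q.
by rewrite !inE /step twist_mate -(same_fconnect1_r (@step_inj s)).
Qed.

Lemma twists_sm s x : twists s (sm s x) = twists s x.
Proof.
rewrite -(twists_sm_arc s x) {1}/twists -[RHS](card_preimset _ (@sm_inj _ s)).
by apply: eq_card => q; rewrite !inE step_smE smK.
Qed.

Lemma projc_twists s p x : x \in circ s p -> projc s p = odd (twists s x).
Proof.
rewrite /projc /canon -(circ_cmin s p) circE; move: (cmin s p) => m Hx.
rewrite (twists_sm_arc s m); case/orP: Hx => Hx; last rewrite -(twists_sm s x);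
  by congr (odd _); apply: eq_card => q; rewrite !inE (same_step Hx).
Qed.

End Circles.

Lemma opposite_sep (s : state D) (y z : port D) : z.1 = y.1 ->
  cmin s y != cmin s (addp y 2) -> cmin s z != cmin s (addp z 2).
Proof.
have E4 : addp (addp y 2) 2 = y by rewrite addpA addp4.
have E5 : addp (addp y 3) 2 = addp y 1 by rewrite addpA (addp_mod y 5).
have sm13 : cmin s (addp y 1) = cmin s (addp y 2) /\ cmin s (addp y 3) = cmin s y
         \/ cmin s (addp y 1) = cmin s y /\ cmin s (addp y 3) = cmin s (addp y 2).
  rewrite -[cmin s (addp y 3)]cmin_sm -[cmin s (addp y 1)]cmin_sm.
  by case: (sm_odd_ports s y); case: ifP => _ -> ->; [left | right].
move=> Hz Hy; case: (port_cases Hz) => -> //.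
- by rewrite addpA; case: sm13 => [[-> ->] | [-> ->]]; rewrite // eq_sym.
- by rewrite E4 eq_sym.
- by rewrite E5; case: sm13 => [[-> ->] | [-> ->]]; rewrite // eq_sym.
Qed.

Lemma eps_ref_circ (q : port D) (s : state D) x y :
  circ s x = circ s y -> eps_ref q s x = eps_ref q s y.
Proof. by move=> E; rewrite /eps_ref E (canon_eq E). Qed.

Lemma opposite_in_circ (s : state D) (p z : port D) : p.1 = z.1 ->
  (z \in circ s p) || (addp z 2 \in circ s p).
Proof.
move=> Hpz; have := circ_self s p; rewrite -circ_sm_mem.
case: (port_cases Hpz) => ->; rewrite ?circ_self ?orbT //;
  case: (sm_odd_ports s z); case: ifP => _ E1 E3; rewrite ?E1 ?E3 => ->;
  by rewrite ?orbT.
Qed.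

Lemma circ_all_ports (s : state D) (y z : port D) : z.1 = y.1 ->
  cmin s y = cmin s (addp y 2) -> z \in circ s y.
Proof.
move=> Hz Ey; have Hy2 : addp y 2 \in circ s y by rewrite (cmin_circ_eq Ey) circ_self.
by case: (crossing_ports s Hz) => ->; rewrite ?circ_sm_mem ?circ_self.
Qed.

Section Resmoothing.
Variable c : 'I_(ncross D).
Variables s s' : state D.
Hypothesis Hc : s c != s' c.
Hypothesis Hoff : forall x, x != c -> s x = s' x.
Implicit Types p q w y z : port D.

Lemma diff_at z : z.1 = c -> s z.1 != s' z.1.
Proof. by move=> ->. Qed.

Lemma sm_half_turn z : z.1 = c -> sm s (sm s' z) = addp z 2.
Proof. by move=> Hz; rewrite sm_switch // eq_sym diff_at. Qed.

Lemma sm_half_turn' z : z.1 = c -> sm s' (sm s z) = addp z 2.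
Proof. by move=> Hz; rewrite sm_switch // diff_at. Qed.

Lemma sm_opposite z : z.1 = c -> sm s (addp z 2) = sm s' z.
Proof. by move=> Hz; rewrite -(sm_half_turn Hz) smK. Qed.

Lemma sm_opposite' z : z.1 = c -> sm s' (addp z 2) = sm s z.
Proof. by move=> Hz; rewrite -(sm_half_turn' Hz) smK. Qed.

Lemma step_off p : p.1 != c -> step s p = step s' p.
Proof. by move=> H; rewrite /step (sm_eq_at (s' := s')) // Hoff. Qed.

Lemma return_avoids_c z1 j : z1.1 = c ->
  let t := findex (step s) z1 (sm s' z1) in
  fconnect (step s) z1 (sm s' z1) -> 0 < j < t -> (iter j (step s) z1).1 != c.
Proof.
move=> Hz1 t H /andP [j0 jt]; apply/negP => /eqP Hw.
have jo : j < order (step s) z1 by apply: ltn_trans (findex_max H).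
have Hfi := findex_iter jo.
have Hw' : (iter j (step s) z1).1 = z1.1 by rewrite Hw Hz1.
case: (crossing_ports s' Hw') => E.
- by move: Hfi j0; rewrite E findex0 => <-.
- move: (step_not_sm s (sm s' z1)); rewrite sm_half_turn // -E.
  by rewrite (connect_trans _ (fconnect_iter _ j _)) // step_sym.
- by move: Hfi jt; rewrite E -/t => ->; rewrite ltnn.
- by move: (step_not_sm s z1); rewrite -sm_opposite' // -E fconnect_iter.
Qed.

Lemma glue z1 : z1.1 = c -> fconnect (step s) z1 (sm s' z1) ->
  cmin s' z1 = cmin s' (addp z1 2).
Proof.
move=> Hz1 H; set z2 := sm s' z1 in H.
set t := findex (step s) z1 z2.
have Ht0 : 0 < t by rewrite lt0n findex_eq0 eq_sym sm_neq.
have Hit j : j < t -> iter j.+1 (step s') (addp z1 2) = iter j.+1 (step s) z1.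
  elim: j => [|j IH] Hj; first by rewrite /= /step sm_opposite'.
  rewrite iterS IH ?(ltnW Hj) // -step_off //.
  by apply: return_avoids_c; rewrite ?Hj.
have Hf : fconnect (step s') (addp z1 2) z2.
  have := Hit t.-1; rewrite ltn_predL Ht0 => /(_ isT).
  by rewrite prednK // (iter_findex H) => <-; apply: fconnect_iter.
by rewrite -(cmin_sm s' z1); apply: cmin_mem; rewrite circE Hf.
Qed.

Lemma canon_resmooth y : y.1 = c ->
  (cmin s y != cmin s (addp y 2)) || (cmin s' y != cmin s' (addp y 2)) ->
  forall z p, z.1 = c -> z \in circ s p -> sm s' z \in circ s p ->
  canon s p (sm s' z) = ~~ canon s p z.
Proof.
move=> Hy Hsep z p Hz Hzin Hzin'.
have Hzy : z.1 = y.1 by rewrite Hz Hy.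
have E2 := sm_half_turn Hz.
case/orP: Hsep => Hsep.
  have := opposite_sep Hzy Hsep.
  have H2 : addp z 2 \in circ s p by rewrite -E2 circ_sm_mem.
  by rewrite (cmin_mem Hzin) (cmin_mem H2) eqxx.
have Hnz := opposite_sep Hzy Hsep.
rewrite /canon; set m := cmin s p.
case Ez: (fconnect (step s) m z); case Ew: (fconnect (step s) m (sm s' z)) => //.
  have Hzz : fconnect (step s) z (sm s' z).
    by apply: connect_trans Ew; rewrite step_sym.
  by move: Hnz; rewrite (glue Hz Hzz) eqxx.
set u := sm s z.
have Hu : fconnect (step s) m u.
  by move: (canon_sm Hzin); rewrite /canon -/m Ez /= => ->.
have Hu' : fconnect (step s) m (sm s' u).
  by move: (canon_sm Hzin'); rewrite /canon -/m Ew /= E2 -(sm_half_turn' Hz).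
have Hu1 : u.1 = c by rewrite sm_fst.
have Huy : u.1 = y.1 by rewrite Hu1 Hy.
have := opposite_sep Huy Hsep; rewrite (glue Hu1) ?eqxx //.
by apply: connect_trans Hu'; rewrite step_sym.
Qed.

(* A circle of s through c which s' splits into the circles of z1 and
   z1 + 2: its forward orbit from z1 is the union of those of the two new
   circles, so its twisted ports are shared between them. *)
Section Split.
Variable z1 : port D.
Hypothesis Hz1 : z1.1 = c.
Hypothesis Hsep : cmin s' z1 != cmin s' (addp z1 2).
Hypothesis Hjoin : fconnect (step s) z1 (addp z1 2).
Local Notation z2 := (addp z1 2).

Lemma z2_notin : z2 \notin circ s' z1.
Proof. by apply: contra Hsep => /cmin_mem ->. Qed.

Lemma z1_notin : z1 \notin circ s' z2.
Proof. by apply: contra Hsep => /cmin_mem ->. Qed.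

Lemma split_closed_s w :
  fconnect (step s') z1 w || fconnect (step s') z2 w ->
  fconnect (step s') z1 (step s w) || fconnect (step s') z2 (step s w).
Proof.
case Hwc: (w.1 != c) => Hw.
  by rewrite (step_off Hwc); case/orP: Hw => Hw; apply/orP; [left|right];
    apply: connect_trans Hw (fconnect1 _ _).
move/negbFE/eqP: Hwc => Hwc; have Hw' : w.1 = z1.1 by rewrite Hwc Hz1.
case: (crossing_ports s Hw') => E; rewrite E in Hw *.
- by rewrite /step -sm_opposite' // fconnect1 orbT.
- by rewrite /step sm_opposite // fconnect1.
- move: Hw; rewrite -sm_opposite' // (negbTE (step_not_sm s' z2)) orbF => H.
  by move: z2_notin; rewrite circE H orbT.
- move: Hw; rewrite sm_opposite // (negbTE (step_not_sm s' z1)) /= => H.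
  by move: z1_notin; rewrite circE H orbT.
Qed.

Lemma split_closed_s' w :
  fconnect (step s) z1 w -> fconnect (step s) z1 (step s' w).
Proof.
case Hwc: (w.1 != c) => Hw.
  by rewrite -(step_off Hwc); apply: connect_trans Hw (fconnect1 _ _).
move/negbFE/eqP: Hwc => Hwc; have Hw' : w.1 = z1.1 by rewrite Hwc Hz1.
case: (crossing_ports s Hw') => E; rewrite E in Hw *.
- by rewrite /step -sm_opposite // (connect_trans Hjoin) // fconnect1.
- by rewrite /step sm_opposite' // fconnect1.
- by move: (step_not_sm s z1); rewrite Hw.
- move: (step_not_sm s z2).
  by rewrite (connect_trans _ Hw) // step_sym.
Qed.

Lemma split_orbit : [set q | fconnect (step s) z1 q] =
  [set q | fconnect (step s') z1 q] :|: [set q | fconnect (step s') z2 q].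
Proof.
apply/setP => q; rewrite !inE; apply/idP/idP.
  by apply: (fclosed_orbit split_closed_s); rewrite connect0.
by case/orP; apply: (fclosed_orbit split_closed_s'); rewrite ?connect0.
Qed.

Lemma twists_split : twists s z1 = twists s' z1 + twists s' z2.
Proof.
have ET (t : state D) x : [set q | fconnect (step t) x q & twist D q] =
    [set q | fconnect (step t) x q] :&: [set q | twist D q].
  by apply/setP => q; rewrite !inE.
rewrite /twists !ET split_orbit setIUl cardsU.
suff -> : [set q | fconnect (step s') z1 q] :&: [set q | twist D q]
   :&: ([set q | fconnect (step s') z2 q] :&: [set q | twist D q]) = set0.
  by rewrite cards0 subn0.
apply/setP => q; rewrite !inE; apply/negP => /andP [/andP [H1 _] /andP [H2 _]].
move: z2_notin; rewrite circE (connect_trans H1) //.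
by rewrite step_sym.
Qed.

End Split.

Lemma circ_resmooth_sub x :
  (forall z, z.1 = c -> z \in circ s x) -> {subset circ s' x <= circ s x}.
Proof.
move=> Hall.
have Hcl w : w \in circ s x -> step s' w \in circ s x.
  case Hwc: (w.1 != c) => Hw; first by rewrite -(step_off Hwc) circ_step.
  move/negbFE/eqP: Hwc => Hwc.
  have -> : step s' w = step s (sm s (sm s' w)) by rewrite /step smK.
  by apply: circ_step; apply: Hall; rewrite !sm_fst.
have Hsm w : w \in circ s x -> sm s' w \in circ s x.
  case Hwc: (w.1 != c) => Hw; last by apply: Hall; rewrite sm_fst; apply/eqP/negbFE.
  by rewrite -(sm_eq_at (s := s)) ?Hoff // circ_sm_mem.
move=> y; rewrite circE => /orP [] H; last rewrite -[y](smK s'); [|apply: Hsm];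
  exact: (fclosed_orbit (A := fun w => w \in circ s x) Hcl (circ_self s x) H).
Qed.

Lemma split_names_uniq y : y.1 = c ->
  cmin s y = cmin s (addp y 2) -> cmin s' y != cmin s' (addp y 2) ->
  uniq (inl (cmin s' y) :: inl (cmin s' (addp y 2))
        :: [seq x <- corder s | x != inl (cmin s y)]).
Proof.
move=> Hy EA NB.
have Hall z : z.1 = c -> z \in circ s y.
  by move=> Hz; apply: circ_all_ports EA; rewrite Hz Hy.
have Hall2 z : z.1 = c -> z \in circ s (addp y 2).
  by move=> Hz; rewrite -(cmin_circ_eq EA) Hall.
have NotR B : B \in circ s y -> inl B \notin [seq x <- corder s | x != inl (cmin s y)].
  rewrite mem_filter => HB; apply/negP => /andP [Hne /corder_circ /= /eqP HC].
  by move: Hne; rewrite -HC (cmin_mem HB) eqxx.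
rewrite /= inE negb_or (inj_eq (@inl_inj _ _)) NB filter_uniq ?corder_uniq // andbT.
rewrite !NotR //; last by apply: (circ_resmooth_sub Hall); apply: cmin_in.
by rewrite (cmin_circ_eq EA); apply: (circ_resmooth_sub Hall2); apply: cmin_in.
Qed.

Lemma canon_opposite y : y.1 = c ->
  cmin s y = cmin s (addp y 2) -> cmin s' y != cmin s' (addp y 2) ->
  forall z, z.1 = c -> canon s y (addp z 2) = canon s y z.
Proof.
move=> Hy EA NB z Hz.
have Hall w : w.1 = c -> w \in circ s y by move=> Hw; apply: circ_all_ports EA; rewrite Hw Hy.
have HC := canon_resmooth Hy (introT orP (or_intror NB)).
by rewrite -sm_half_turn // canon_sm ?HC ?negbK ?Hall ?sm_fst.
Qed.

Lemma split_projective y : y.1 = c ->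
  cmin s y = cmin s (addp y 2) -> cmin s' y != cmin s' (addp y 2) ->
  cproj s (inl (cmin s y)) ->
  cproj s' (inl (cmin s' y)) != cproj s' (inl (cmin s' (addp y 2))).
Proof.
move=> Hy EA NB /=.
have Hall w : w.1 = c -> w \in circ s y by move=> Hw; apply: circ_all_ports EA; rewrite Hw Hy.
set z1 := if canon s y y then y else sm s y.
have Hz1 : z1.1 = c by rewrite /z1; case: ifP; rewrite ?sm_fst.
have Cz1 : canon s y z1.
  by rewrite /z1; case: ifP => // /negbT H; rewrite canon_sm // circ_self.
have Fz : fconnect (step s) z1 (addp z1 2).
  move: (Cz1); rewrite -(canon_opposite Hy EA NB Hz1) /canon.
  by apply: connect_trans; rewrite step_sym.
have Nz : cmin s' z1 != cmin s' (addp z1 2).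
  by apply: opposite_sep NB; rewrite Hz1 Hy.
rewrite (projc_twists (x := z1)) ?circ_cmin ?Hall // twists_split // oddD.
have [[H1 H2]|[H1 H2]] : (z1 \in circ s' y /\ addp z1 2 \in circ s' (addp y 2)) \/
                         (z1 \in circ s' (addp y 2) /\ addp z1 2 \in circ s' y).
- rewrite /z1; case: ifP => _; first by left; rewrite !circ_self.
  right; split; first by rewrite -sm_opposite' // circ_sm_mem circ_self.
  by rewrite -sm_addp2 sm_opposite // circ_sm_mem circ_self.
- rewrite (projc_twists (x := z1)) ?(projc_twists (x := addp z1 2)) ?circ_cmin //.
  by case: (odd _); case: (odd _).
- rewrite (projc_twists (x := addp z1 2)) ?(projc_twists (x := z1)) ?circ_cmin //.
  by case: (odd _); case: (odd _).
Qed.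

Section NotOneToOne.
Variable y : port D.
Hypothesis Hy : y.1 = c.
Hypothesis Hsep : (cmin s y != cmin s (addp y 2)) || (cmin s' y != cmin s' (addp y 2)).

Lemma canon_adjacent p z w : z.1 = c -> z \in circ s p -> w \in circ s p ->
  (w = addp z 1 \/ w = addp z 3) -> canon s p w = ~~ canon s p z.
Proof.
move=> Hz Hzi Hwi Hw; have HC := canon_resmooth Hy Hsep Hz.
case: (sm_switch_nbrs (diff_at Hz)) => [[E1 E2]|[E1 E2]]; case: Hw => Hw;
  subst w; first [by rewrite -E1 canon_sm | by rewrite -E2 HC // E2].
Qed.

Lemma eps_ref_rot q p : q.1 = c -> p.1 = c -> eps_ref (addp q 1) s p = (- eps_ref q s p)%R.
Proof.
move=> Hq Hp; rewrite /eps_ref addpA /=.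
set r := if q \in circ s p then q else addp q 2.
set r' := if addp q 1 \in circ s p then addp q 1 else addp q 3.
have Hpq : p.1 = q.1 by rewrite Hp Hq.
have Hpq1 : p.1 = (addp q 1).1 by rewrite addp_fst Hp Hq.
have Hr : r \in circ s p.
  by rewrite /r; case: ifP => // /negbT; move: (opposite_in_circ s Hpq); case: (_ \in _).
have Hr' : r' \in circ s p.
  rewrite /r'; case: ifP => // /negbT; move: (opposite_in_circ s Hpq1).
  by rewrite addpA; case: (_ \in _).
suff -> : canon s p r' = ~~ canon s p r by case: (canon _ _ _).
apply: canon_adjacent => //; first by rewrite /r; case: ifP.
by rewrite /r /r'; do 2 case: ifP => _; rewrite ?addpA ?(addp_mod q 5) ?(addp_mod q 4)
  ?addp0; by [left | right].
Qed.

End NotOneToOne.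
End Resmoothing.

Lemma rot_circles (t : state D) (q : port D) :
  let b := t q.1 == ~~ odd q.2 in
  circ t (addp q 2) = circ t (if b then addp q 1 else addp q 3) /\
  circ t q = circ t (if b then addp q 3 else addp q 1).
Proof.
move: (sm_odd_ports t q) => /=; case: ifP => _ [E1 E3].
  by split; [rewrite -{1}E1 | rewrite -{1}E3]; rewrite circ_sm.
by split; [rewrite -{1}E3 | rewrite -{1}E1]; rewrite circ_sm.
Qed.

Lemma eps_ref_name (q : port D) (t : state D) x y :
  cidp t x = cidp t y -> eps_ref q t x = eps_ref q t y.
Proof. by case=> /cmin_circ_eq; apply: eps_ref_circ. Qed.

Lemma dedge_ref_rot c (q : port D) (s0 : state D) (l0 : lab D) (s1 : state D)
    (l1 : lab D) : q.1 = c -> is_edge c s0 s1 ->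
  dedge_ref (addp q 1) (s0, l0) (s1, l1) =
  ((if odd q.2 then 1 else -1) * dedge_ref q (s0, l0) (s1, l1))%R.
Proof.
move=> Hq /is_edgeP [H0 H1 Hoff].
have Hoff' x : x != c -> s1 x = s0 x by move=> /Hoff ->.
have Hc : s0 c != s1 c by rewrite H0 H1.
have Hc' : s1 c != s0 c by rewrite eq_sym.
rewrite /dedge_ref /=; case: ifP => _; first by rewrite mulr0.
rewrite !addpA /= (addp_mod q 4) addp0.
set p1 := addp q 1; set p3 := addp q 3.
have Hp1 : p1.1 = c by rewrite addp_fst.
have Hp3 : addp p1 2 = p3 by rewrite addpA.
have [R02 R00] := rot_circles s0 q; have [R12 R10] := rot_circles s1 q.
rewrite /= Hq H0 H1 /= in R02 R00 R12 R10.
(* in a 1 -> 1 bifurcation both sides vanish *)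
case Sep : ((cmin s0 p1 != cmin s0 p3) || (cmin s1 p1 != cmin s1 p3)); last first.
  move/negbT: Sep => /norP [/negbNE/eqP EA /negbNE/eqP EB].
  rewrite /cidp !(cmin_eq R02) !(cmin_eq R00) !(cmin_eq R12) !(cmin_eq R10).
  by case: (odd q.2); rewrite EA EB !dedge_body_same mulr0.
(* otherwise every local sign is reversed *)
have Sep0 : (cmin s0 p1 != cmin s0 (addp p1 2)) || (cmin s1 p1 != cmin s1 (addp p1 2)).
  by rewrite Hp3.
have Sep1 : (cmin s1 p1 != cmin s1 (addp p1 2)) || (cmin s0 p1 != cmin s0 (addp p1 2)).
  by rewrite orbC.
rewrite !(eps_ref_rot Hc Hoff Hp1 Sep0 Hq) ?addp_fst //.
rewrite !(eps_ref_rot Hc' Hoff' Hp1 Sep1 Hq) ?addp_fst //.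
rewrite /cidp !(eps_ref_circ _ R02) !(eps_ref_circ _ R00) !(eps_ref_circ _ R12).
rewrite !(eps_ref_circ _ R10) !(cmin_eq R02) !(cmin_eq R00) !(cmin_eq R12).
rewrite !(cmin_eq R10) -/p1 -/p3.
case: (odd q.2) => /=.
- rewrite mul1r dedge_body_rot_target ?corder_mem //; first by apply: eps_ref_name.
  move=> [EA] NB; rewrite -Hp3 in EA NB *.
  have NB' : cmin s1 p1 != cmin s1 (addp p1 2) by apply: contra NB => /eqP ->.
  split; first exact: (split_names_uniq Hoff Hp1 EA NB').
  exact: (split_projective Hc Hoff Hp1 EA NB').
- by rewrite mulN1r dedge_body_rot_source ?corder_mem //; apply: eps_ref_name.
Qed.

Fixpoint rot_sign (q : port D) (j : nat) : int :=
  if j is j'.+1 then (rot_sign q j' * (if odd (addp q j').2 then 1 else -1))%R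
  else 1%R.

Lemma rot_sign_sq (q : port D) j : (rot_sign q j * rot_sign q j = 1)%R.
Proof.
elim: j => [|j IH] /=; first by rewrite mulr1.
by rewrite mulrACA IH mul1r; case: ifP; rewrite ?mulr1 ?mulrNN ?mulr1.
Qed.

Lemma dedge_ref_rotn c (q : port D) (s0 : state D) (l0 : lab D) (s1 : state D)
    (l1 : lab D) j : q.1 = c -> is_edge c s0 s1 ->
  dedge_ref (addp q j) (s0, l0) (s1, l1) =
  (rot_sign q j * dedge_ref q (s0, l0) (s1, l1))%R.
Proof.
move=> Hq He; elim: j => [|j IH] /=; first by rewrite addp0 mul1r.
have Hqj : (addp q j).1 = c by rewrite addp_fst.
rewrite -addn1 -addpA (dedge_ref_rot _ _ Hqj He) IH.
by rewrite mulrA [(_ * rot_sign q j)%R]mulrC.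
Qed.

Definition orient_sign (o1 o2 : port D -> bool) (c : 'I_(ncross D)) : int :=
  rot_sign (ne o1 c) (((ne o2 c).2 + 4 - (ne o1 c).2) %% 4).

Lemma dedge_orient (o1 o2 : port D -> bool) c (b0 b1 : basis D) :
  is_edge c b0.1 b1.1 -> dedge o2 c b0 b1 = (orient_sign o1 o2 c * dedge o1 c b0 b1)%R.
Proof.
case: b0 b1 => s0 l0 [s1 l1] /= He; rewrite !dedgeE.
by rewrite {1}(@addp_diff _ (ne o1 c) (ne o2 c)) //
  (@dedge_ref_rotn c (ne o1 c) s0 l0 s1 l1 _ (erefl c) He).
Qed.

Definition state_sign (o1 o2 : port D -> bool) (b : basis D) : int :=
  (\prod_(c | b.1 c) orient_sign o1 o2 c)%R.

Lemma state_sign_sq (o1 o2 : port D -> bool) b :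
  (state_sign o1 o2 b * state_sign o1 o2 b = 1)%R.
Proof. by rewrite /state_sign -big_split /=; apply: big1 => c _; apply: rot_sign_sq. Qed.

Lemma state_sign_edge (o1 o2 : port D -> bool) c (b0 b1 : basis D) :
  is_edge c b0.1 b1.1 -> state_sign o1 o2 b1 = (orient_sign o1 o2 c * state_sign o1 o2 b0)%R.
Proof.
move=> /is_edgeP [H0 H1 Hoff]; rewrite /state_sign (bigD1 c) //=.
congr (_ * _)%R; apply: eq_bigl => c'; case: (eqVneq c' c) => [->|Hne].
  by rewrite H0 andbF.
by rewrite andbT Hoff.
Qed.

Lemma dcoef_orient (o1 o2 : port D -> bool) (b0 b1 : basis D) :
  dcoef o2 b0 b1 = (state_sign o1 o2 b0 * state_sign o1 o2 b1 * dcoef o1 b0 b1)%R.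
Proof.
rewrite /dcoef mulr_sumr; apply: eq_bigr => c He.
rewrite (dedge_orient o1 o2 He) (state_sign_edge o1 o2 He).
by rewrite [(state_sign _ _ b0 * _)%R]mulrCA state_sign_sq mulr1.
Qed.

Definition scale_chain (sg : basis D -> int) (x : chain D) : chain D :=
  [ffun b => (sg b * x b)%R].

Lemma dmap_state_sign (o1 o2 : port D -> bool) x :
  dmap o2 (scale_chain (state_sign o1 o2) x) =
  scale_chain (state_sign o1 o2) (dmap o1 x).
Proof.
apply/ffunP => b1; rewrite !ffunE mulr_sumr; apply: eq_bigr => b0 _.
rewrite ffunE (dcoef_orient o1) -[in RHS](mul1r (state_sign o1 o2 b1)).
by rewrite -(state_sign_sq o1 o2 b0); ring.
Qed.

End WellFormed.

Section SignChange.
Variable D : pdiagram.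
Variables o1 o2 : port D -> bool.
Variable sg : basis D -> int.
Hypothesis sg_sq : forall b, (sg b * sg b = 1)%R.
Hypothesis dmap_scale : forall x, dmap o2 (scale_chain sg x) = scale_chain sg (dmap o1 x).
Local Open Scope ring_scope.
Local Notation f := (scale_chain sg).

Lemma scale_chainK : involutive f.
Proof. by move=> x; apply/ffunP => b; rewrite !ffunE mulrA sg_sq mul1r. Qed.

Lemma scale_chain0 : f 0 = 0.
Proof. by apply/ffunP => b; rewrite !ffunE mulr0. Qed.

Lemma scale_chainD x y : f (x + y) = f x + f y.
Proof. by apply/ffunP => b; rewrite !ffunE mulrDr. Qed.

Lemma dmap_scale_inv x : dmap o1 (f x) = f (dmap o2 x).
Proof. by rewrite -[in RHS](scale_chainK x) dmap_scale scale_chainK. Qed.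

Lemma dmap0 (o : port D -> bool) : dmap o 0 = 0.
Proof. by apply/ffunP => b; rewrite !ffunE big1 // => b0 _; rewrite ffunE mul0r. Qed.

Lemma scale_chain_supp x b : f x b != 0 -> x b != 0.
Proof. by rewrite ffunE; apply: contra => /eqP ->; rewrite mulr0. Qed.

Lemma scale_inCg i j k x : inCg i j k x -> inCg i j k (f x).
Proof. by move=> H b /scale_chain_supp /H. Qed.

Lemma scale_inC i x : inC i x -> inC i (f x).
Proof. by move=> H b /scale_chain_supp /H. Qed.

Lemma homology_iso_scale : homology_iso o1 o2.
Proof.
move=> i j k; exists f; split.
- by move=> x y _ _; apply: scale_chainD.
- by move=> x [H1 H2]; split; [apply: scale_inCg | rewrite dmap_scale H2 scale_chain0].
- move=> x [H1 [y [Hy Hdy]]]; split; first exact: scale_inCg.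
  by exists (f y); split; [apply: scale_inC | rewrite dmap_scale Hdy].
- move=> x [H1 _] [_ [y [Hy Hdy]]]; split => //.
  by exists (f y); split; [apply: scale_inC | rewrite dmap_scale_inv Hdy scale_chainK].
- move=> z [H1 H2]; exists (f z); split.
    by split; [apply: scale_inCg | rewrite dmap_scale_inv H2 scale_chain0].
  rewrite scale_chainK subrr; split; first by move=> b; rewrite ffunE eqxx.
  by exists 0; split; [move=> b; rewrite ffunE eqxx | apply: dmap0].
Qed.

End SignChange.

Unset Implicit Arguments.
Theorem lemma2 (D : pdiagram) (o1 o2 : port D -> bool) :
  well_formed D -> realizable D -> orientation o1 -> orientation o2 ->
  homology_iso o1 o2.
Proof.
move=> [mateK [mate_neq twist_mate]] _ _ _.
apply: (homology_iso_scale (sg := state_sign o1 o2)) => [b | x].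
  exact: state_sign_sq.
exact: dmap_state_sign.
Qed.
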